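(* There exist sets of identities $\Sigma_1,\Sigma_2$ of type $(2)$ such that $D(\Sigma_1)\subsetneqq SR(\Sigma_1)$ and $SR(\Sigma_2)\subsetneqq \Sigma R(\Sigma_2)$.
   Context: Type $\tau=(2)$: one binary symbol $f$; $W_\tau(X)$ terms over $X=\{x_1,x_2,\dots\}$, $W_\tau(X_n)$ terms in $x_1,\dots,x_n$. For a set $\Gamma$ of identities, $\Gamma\models t\approx s$ means every groupoid satisfying $\Gamma$ satisfies $t\approx s$. Positions $Pos(t)\subseteq\{1,2\}^*$ (root $\varepsilon$, children $p1,p2$), $sub_t(p)$ subterm at $p$, $\preceq$ prefix order; $t(p;r)$ replaces the subterm at $p$ by $r$; $t(x\leftarrow r)$ replaces every occurrence of the variable $x$ by $r$. $D(\Sigma)$ is the smallest set of identities containing $\Sigma$ and closed under reflexivity, symmetry, transitivity, variable substitution ($t\approx s\Rightarrow t(x\leftarrow r)\approx s(x\leftarrow r)$) and positional replacement ($t\approx s$, $sub_r(p)=t$ $\Rightarrow r(p;s)\approx r$), i.e. the equational theory generated by $\Sigma$. A position $p\in Pos(t)$, $t\in W_\tau(X_n)$, is $\Gamma$-essential if some $\mathcal A\models\Gamma$ has the term operation of $t(p;x_{n+1})$ depending on $x_{n+1}$; $PEss(t,\Gamma)$ is the set of these. $SEss(t,\Gamma)=\{r\mid\Gamma\models r\approx sub_t(p),\ p\in PEss(t,\Gamma)\}$. $P_r^t$ is the set of $\preceq$-minimal elements of $\{p\in Pos(t)\mid\Gamma\models sub_t(p)\approx r\}$. $\Sigma$-composition: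 $t^\Gamma(r\leftarrow u)=t$ if $P_r^t=\emptyset$, else $t$ with the subterms at all positions of $P_r^t$ replaced by $u$. Essential composition: $EP_r^t=\{p\in P_r^t\mid\text{every }q\in Pos(t)\text{ with }p\preceq q\text{ lies in }PEss(t,\Gamma)\}$; $t(r*u)=t$ if $EP_r^t=\emptyset$, else $t$ with the subterms at all positions of $EP_r^t$ replaced by $u$. $\Gamma$ is $\Sigma R$-deductively closed (resp. $SR$-deductively closed) if it is closed under reflexivity, symmetry, transitivity, variable substitution, and: $t\approx s\in\Gamma$, $r\in SEss(t,\Gamma)\cap SEss(s,\Gamma)$ imply $t^\Gamma(r\leftarrow u)\approx s^\Gamma(r\leftarrow u)\in\Gamma$ (resp. $t(r*u)\approx s(r*u)\in\Gamma$) for all $u$. $\Sigma R(\Sigma)$ and $SR(\Sigma)$ are the smallest such sets containing $\Sigma$. *)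

From Stdlib Require Import List Arith PeanoNat Classical ClassicalEpsilon.
Import ListNotations.

(* Terms of type (2) over X = {x_1, x_2, ...}; Var i stands for x_(i+1). *)
Inductive term : Type :=
| Var : nat -> term
| App : term -> term -> term.

Definition identity : Type := (term * term)%type.
Definition idset : Type := identity -> Prop.

(* Positions: words over {1,2}; false = 1 (left child), true = 2 (right). *)
Definition pos : Type := list bool.

Definition prefix (p q : pos) : Prop := exists s, q = p ++ s.

Fixpoint subterm (t : term) (p : pos) : option term :=
  match p with
  | [] => Some t
  | b :: p' => match t with
               | Var _ => None
               | App a c => subterm (if b then c else a) p'
               end
  end.

Definition in_Pos (t : term) (p : pos) : Prop := subterm t p <> None.

Fixpoint replace_at (t : term) (p : pos) (r : term) : term :=
  match p with
  | [] => r
  | b :: p' => match t with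
               | Var _ => t
               | App a c => if b then App a (replace_at c p' r)
                            else App (replace_at a p' r) c
               end
  end.

Fixpoint subst_var (t : term) (x : nat) (r : term) : term :=
  match t with
  | Var y => if Nat.eqb x y then r else t
  | App a c => App (subst_var a x r) (subst_var c x r)
  end.

Fixpoint maxvar (t : term) : nat :=
  match t with
  | Var i => i
  | App a c => Nat.max (maxvar a) (maxvar c)
  end.

(* t ∈ W(X_n) with n = fresh t; the variable x_(n+1) is Var n. *)
Definition fresh (t : term) : nat := S (maxvar t).

Fixpoint eval {A : Type} (op : A -> A -> A) (v : nat -> A) (t : term) : A :=
  match t with
  | Var i => v i
  | App a c => op (eval op v a) (eval op v c)
  end.

Definition sat {A : Type} (op : A -> A -> A) (e : identity) : Prop :=
  forall v : nat -> A, eval op v (fst e) = eval op v (snd e).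

Definition models (G : idset) {A : Type} (op : A -> A -> A) : Prop :=
  forall e, G e -> sat op e.

Definition entails (G : idset) (e : identity) : Prop :=
  forall (A : Type) (op : A -> A -> A), models G op -> sat op e.

Definition upd {A : Type} (v : nat -> A) (x : nat) (a : A) : nat -> A :=
  fun y => if Nat.eqb y x then a else v y.

Definition PEss (G : idset) (t : term) (p : pos) : Prop :=
  in_Pos t p /\
  exists (A : Type) (op : A -> A -> A), models G op /\
    exists (v : nat -> A) (a b : A),
      eval op (upd v (fresh t) a) (replace_at t p (Var (fresh t)))
      <> eval op (upd v (fresh t) b) (replace_at t p (Var (fresh t))).

Definition SEss (G : idset) (t r : term) : Prop :=
  exists p s, PEss G t p /\ subterm t p = Some s /\ entails G (r, s).

Definition Pcand (G : idset) (t r : term) (p : pos) : Prop :=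
  exists s, subterm t p = Some s /\ entails G (s, r).

Definition Pset (G : idset) (t r : term) (p : pos) : Prop :=
  Pcand G t r p /\ forall q, Pcand G t r q -> prefix q p -> q = p.

Definition EPset (G : idset) (t r : term) (p : pos) : Prop :=
  Pset G t r p /\ forall q, in_Pos t q -> prefix p q -> PEss G t q.

(* For an antichain of positions (as P_r^t, EP_r^t are) this replaces exactly
   the subterms at all those positions; it is t if no position of t is in P. *)
Fixpoint replace_set (P : pos -> Prop) (t u : term) : term :=
  if excluded_middle_informative (P []) then u
  else match t with
       | Var _ => t
       | App a c => App (replace_set (fun p => P (false :: p)) a u)
                        (replace_set (fun p => P (true :: p)) c u)
       end.

Definition sigma_comp (G : idset) (t r u : term) : term :=
  replace_set (Pset G t r) t u.

Definition ess_comp (G : idset) (t r u : term) : term :=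
  replace_set (EPset G t r) t u.

Definition basic_closed (G : idset) : Prop :=
  (forall t, G (t, t)) /\
  (forall t s, G (t, s) -> G (s, t)) /\
  (forall t s w, G (t, s) -> G (s, w) -> G (t, w)) /\
  (forall t s x r, G (t, s) -> G (subst_var t x r, subst_var s x r)).

Definition SigmaR_closed (G : idset) : Prop :=
  basic_closed G /\
  forall t s r u, G (t, s) -> SEss G t r -> SEss G s r ->
    G (sigma_comp G t r u, sigma_comp G s r u).

Definition SR_closed (G : idset) : Prop :=
  basic_closed G /\
  forall t s r u, G (t, s) -> SEss G t r -> SEss G s r ->
    G (ess_comp G t r u, ess_comp G s r u).

Definition incl (G H : idset) : Prop := forall e, G e -> H e.

Definition strict_incl (G H : idset) : Prop :=
  incl G H /\ exists e, H e /\ ~ G e.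

Definition least_closure (C : idset -> Prop) (S G : idset) : Prop :=
  C G /\ incl S G /\ forall H, C H -> incl S H -> incl G H.

Inductive D (S : idset) : idset :=
| D_base : forall e, S e -> D S e
| D_refl : forall t, D S (t, t)
| D_sym : forall t s, D S (t, s) -> D S (s, t)
| D_trans : forall t s w, D S (t, s) -> D S (s, w) -> D S (t, w)
| D_subst : forall t s x r, D S (t, s) -> D S (subst_var t x r, subst_var s x r)
| D_repl : forall t s r p, D S (t, s) -> subterm r p = Some t ->
    D S (replace_at r p s, r).

(* Σ₁ = {x₀x₁ ≈ x₀}.  D(Σ₁) is sound for the two-element left-zero groupoid,
   so x₀ ≈ x₁ ∉ D(Σ₁), whereas every SR-closed Γ ⊇ Σ₁ contains all
   identities: if some identity of Γ fails in the left-zero groupoid, Γ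
   equates two distinct leftmost variables; otherwise that groupoid is a model
   of Γ, roots are Γ-essential and position 2 of x₀x₁ is not, and the
   essential composition of x₀ ≈ x₀x₁ with r = x₀, u = x₁ gives x₁ ≈ x₀x₁.

   Σ₂ is the set of identities of a three-element groupoid A₃; they are the
   trivial ones, xᵢxⱼ ≈ xⱼxᵢ, and deep ≈ deep (deep = depth at least 2).
   Σ₂ is SR-closed, so SR(Σ₂) = Σ₂: essential composition leaves deep terms
   unchanged and acts on the terms xᵢxⱼ as a substitution.  ΣR(Σ₂) is the set
   Z of trivial identities and identities between compound terms: Z is
   ΣR-closed, and a ΣR-closed Γ ⊇ Σ₂ proves every ab ≈ (x₀x₀)x₀, either by a
   case analysis on an identity of Γ failing in a four-element groupoid A₄, or,
   when A₄ is a model of Γ, by Σ-composition of x₂(x₀x₁) ≈ x₃(x₀x₁). *)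
From Stdlib Require Import List Arith PeanoNat Lia Classical ClassicalEpsilon.
Import ListNotations.

Lemma upd_eq {A} (v : nat -> A) x a : upd v x a x = a.
Proof. unfold upd. now rewrite Nat.eqb_refl. Qed.

Lemma upd_neq {A} (v : nat -> A) x a y : y <> x -> upd v x a y = v y.
Proof. intros H. unfold upd. destruct (Nat.eqb_spec y x); congruence. Qed.

Lemma eval_subst {A} (op : A -> A -> A) v t x r :
  eval op v (subst_var t x r) = eval op (upd v x (eval op v r)) t.
Proof.
  induction t as [y|a IHa b IHb]; simpl.
  - unfold upd. rewrite Nat.eqb_sym. destruct (Nat.eqb y x); reflexivity.
  - now rewrite IHa, IHb.
Qed.

Lemma eval_ext {A} (op : A -> A -> A) v w t :
  (forall n, n <= maxvar t -> v n = w n) -> eval op v t = eval op w t.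
Proof.
  induction t as [y|a IHa b IHb]; simpl; intros H.
  - apply H. lia.
  - rewrite IHa, IHb; auto; intros n Hn; apply H; lia.
Qed.

Fixpoint occ (x : nat) (t : term) : bool :=
  match t with Var y => Nat.eqb x y | App a b => occ x a || occ x b end.

Lemma occ_above_maxvar x t : maxvar t < x -> occ x t = false.
Proof.
  induction t as [y|a IHa b IHb]; simpl; intros H.
  - apply Nat.eqb_neq. lia.
  - rewrite IHa, IHb; auto; lia.
Qed.

Lemma subst_notocc x t r : occ x t = false -> subst_var t x r = t.
Proof.
  induction t as [y|a IHa b IHb]; simpl; intros h.
  - rewrite h; reflexivity.
  - apply Bool.orb_false_iff in h. rewrite IHa, IHb; tauto.
Qed.

Lemma sv_app a b x r : subst_var (App a b) x r = App (subst_var a x r) (subst_var b x r).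
Proof. reflexivity. Qed.

Lemma sv_eq x r : subst_var (Var x) x r = r.
Proof. simpl. now rewrite Nat.eqb_refl. Qed.

Lemma sv_neq x y r : x <> y -> subst_var (Var y) x r = Var y.
Proof. intros H. simpl. destruct (Nat.eqb_spec x y); congruence. Qed.

Lemma maxvar_replace t p r :
  maxvar (replace_at t p r) <= Nat.max (maxvar t) (maxvar r).
Proof.
  revert t; induction p as [|b p IH]; intros t.
  - destruct t; simpl; lia.
  - destruct t as [y|a c]; simpl; [lia|].
    destruct b; simpl; [specialize (IH c) | specialize (IH a)]; lia.
Qed.

Lemma subterm_nil t : subterm t [] = Some t.
Proof. destruct t; reflexivity. Qed.

Lemma in_Pos_var n q : in_Pos (Var n) q -> q = [].
Proof. destruct q; [reflexivity| unfold in_Pos; simpl; tauto]. Qed.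

Lemma in_Pos_cons t b q : in_Pos t (b :: q) -> exists a c, t = App a c.
Proof. destruct t as [n|a c]; [unfold in_Pos; simpl; tauto| eauto]. Qed.

Lemma prefix_nil q : prefix q [] -> q = [].
Proof. intros [s Hs]. destruct q; [reflexivity| discriminate]. Qed.

Lemma prefix_one q b : prefix q [b] -> q = [] \/ q = [b].
Proof.
  intros [s Hs]. destruct q as [|c q]; [now left|].
  simpl in Hs. inversion Hs; subst. destruct q; [now right| discriminate].
Qed.

Lemma prefix_refl p : prefix p p.
Proof. exists []. now rewrite app_nil_r. Qed.

Lemma rs_empty (P : pos -> Prop) t u :
  (forall p, ~ P p) -> replace_set P t u = t.
Proof.
  revert P; induction t as [y|a IHa b IHb]; intros P HP; simpl;
    destruct (excluded_middle_informative (P [])) as [h|h];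
    try solve [exfalso; eapply HP; eauto]; [reflexivity|].
  rewrite IHa, IHb; auto; intros p Hp; eapply HP; eauto.
Qed.

Lemma rs_root (P : pos -> Prop) t u : P [] -> replace_set P t u = u.
Proof. intros H. destruct t; simpl; destruct (excluded_middle_informative (P [])); tauto. Qed.

Lemma rs_app (P : pos -> Prop) a b u : ~ P [] ->
  replace_set P (App a b) u =
  App (replace_set (fun p => P (false :: p)) a u) (replace_set (fun p => P (true :: p)) b u).
Proof. intros H. simpl. destruct (excluded_middle_informative (P [])); tauto. Qed.

Lemma rs_var (P : pos -> Prop) n u :
  replace_set P (Var n) u = if excluded_middle_informative (P []) then u else Var n.
Proof. reflexivity. Qed.

Lemma if_em_iff {T} (P Q : Prop) (a b : T) : (P <-> Q) ->
  (if excluded_middle_informative P then a else b) =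
  (if excluded_middle_informative Q then a else b).
Proof.
  intros hPQ. destruct (excluded_middle_informative P), (excluded_middle_informative Q);
    tauto.
Qed.

Fixpoint subst2 (i : nat) (a : term) (j : nat) (b : term) (t : term) : term :=
  match t with
  | Var n => if Nat.eqb n i then a else if Nat.eqb n j then b else Var n
  | App c d => App (subst2 i a j b c) (subst2 i a j b d)
  end.

Lemma subst2_app i a j b c d :
  subst2 i a j b (App c d) = App (subst2 i a j b c) (subst2 i a j b d).
Proof. reflexivity. Qed.

Lemma subst2_var_l i a j b : subst2 i a j b (Var i) = a.
Proof. simpl. now rewrite Nat.eqb_refl. Qed.

Lemma subst2_var_r i a j b : i <> j -> subst2 i a j b (Var j) = b.
Proof.
  intros hij. simpl. rewrite Nat.eqb_refl.
  destruct (Nat.eqb_spec j i); [congruence | reflexivity].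
Qed.

Lemma subst2_var_other i a j b n : n <> i -> n <> j -> subst2 i a j b (Var n) = Var n.
Proof.
  intros hi hj. simpl.
  destruct (Nat.eqb_spec n i), (Nat.eqb_spec n j); congruence.
Qed.

Lemma subst2_as_subst_var i a j b N w : i <> j -> i < N -> j < N ->
  maxvar b < N -> maxvar w < N ->
  subst_var (subst_var (subst_var w i (Var N)) j b) N a = subst2 i a j b w.
Proof.
  intros hij hi hj hb. induction w as [n|w1 IH1 w2 IH2]; simpl maxvar; intros hw.
  - destruct (Nat.eq_dec n i) as [->|hni].
    + rewrite sv_eq, sv_neq, sv_eq, subst2_var_l by lia. reflexivity.
    + destruct (Nat.eq_dec n j) as [->|hnj].
      * rewrite sv_neq, sv_eq, subst_notocc, subst2_var_r by (auto using occ_above_maxvar).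
        reflexivity.
      * rewrite !sv_neq, subst2_var_other by lia. reflexivity.
  - simpl. rewrite IH1, IH2 by lia. reflexivity.
Qed.

Section BasicClosure.
Variable H : idset.
Hypothesis HB : basic_closed H.

Lemma bc_refl t : H (t, t). Proof. apply (proj1 HB). Qed.
Lemma bc_sym t s : H (t, s) -> H (s, t). Proof. apply (proj1 (proj2 HB)). Qed.
Lemma bc_trans t s w : H (t, s) -> H (s, w) -> H (t, w).
Proof. apply (proj1 (proj2 (proj2 HB))). Qed.
Lemma bc_subst t s x r : H (t, s) -> H (subst_var t x r, subst_var s x r).
Proof. apply (proj2 (proj2 (proj2 HB))). Qed.

Lemma bc_subst2 i a j b t s : i <> j -> H (t, s) -> H (subst2 i a j b t, subst2 i a j b s).
Proof.
  intros hij h.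
  set (N := S (i + j + maxvar b + maxvar t + maxvar s)).
  rewrite <- !(subst2_as_subst_var i a j b N) by (unfold N; lia).
  now apply bc_subst, bc_subst, bc_subst.
Qed.

Lemma bc_collapse i j : i <> j -> H (Var i, Var j) -> forall e, H e.
Proof.
  intros hij hv [t s].
  assert (hx : forall w, H (Var i, w)).
  { intros w. pose proof (bc_subst _ _ j w hv) as h.
    now rewrite sv_eq, sv_neq in h by auto. }
  eapply bc_trans; [apply bc_sym, hx | apply hx].
Qed.
End BasicClosure.

Lemma entails_of (G : idset) e : G e -> entails G e.
Proof. intros H A op Hm. apply Hm, H. Qed.

Lemma entails_refl G t : entails G (t, t).
Proof. intros A op _ v. reflexivity. Qed.

Lemma sat_sym {A} (op : A -> A -> A) t s : sat op (t, s) -> sat op (s, t).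
Proof. intros h v. symmetry. apply h. Qed.

Lemma sat_basic_closed {A} (op : A -> A -> A) : basic_closed (sat op).
Proof.
  unfold basic_closed, sat; simpl. split; [|split; [|split]].
  - reflexivity.
  - intros t s h v; symmetry; apply h.
  - intros t s w h1 h2 v; rewrite (h1 v); apply h2.
  - intros t s x r h v; rewrite !eval_subst; apply h.
Qed.

Lemma entails_sat {A} (op : A -> A -> A) e : entails (sat op) e <-> sat op e.
Proof.
  split.
  - intros h. apply h. intros e' he'. exact he'.
  - intros h B opB hm. apply hm. exact h.
Qed.

Lemma eval_replace {A} (op : A -> A -> A) r p t s :
  subterm r p = Some t -> (forall v, eval op v t = eval op v s) ->
  forall v, eval op v (replace_at r p s) = eval op v r.
Proof.
  revert r; induction p as [|b p IH]; intros r Hsub Hts v.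
  - destruct r; simpl in Hsub; inversion Hsub; subst; symmetry; apply Hts.
  - destruct r as [y|a c]; simpl in Hsub; [discriminate|].
    destruct b; simpl; rewrite IH; auto.
Qed.

Lemma D_sound (S : idset) {A} (op : A -> A -> A) :
  models S op -> forall e, D S e -> sat op e.
Proof.
  intros HS e HD. induction HD; unfold sat in *; simpl in *; intros v.
  - apply HS; auto.
  - reflexivity.
  - symmetry; auto.
  - rewrite IHHD1; auto.
  - rewrite !eval_subst. apply IHHD.
  - apply (eval_replace op r p t s); auto.
Qed.

Lemma PEss_root G t {A} (op : A -> A -> A) (a b : A) :
  models G op -> a <> b -> PEss G t [].
Proof.
  intros hm hab. split; [unfold in_Pos; rewrite subterm_nil; discriminate|].
  exists A, op. split; [exact hm|]. exists (fun _ => a), a, b.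
  destruct t; simpl; rewrite !upd_eq; exact hab.
Qed.

(* A position p of t is inessential as soon as Γ proves that the term t(p; z),
   z fresh, does not change when z is renamed to another fresh variable. *)
Lemma not_PEss G t p :
  entails G (replace_at t p (Var (fresh t)),
             subst_var (replace_at t p (Var (fresh t))) (fresh t) (Var (S (fresh t)))) ->
  ~ PEss G t p.
Proof.
  intros he [_ (A & op & hm & v & a & b & hne)]. apply hne.
  set (z := fresh t) in *. set (T := replace_at t p (Var z)) in *.
  assert (hmx : maxvar T <= z).
  { unfold T. pose proof (maxvar_replace t p (Var z)). simpl in *. unfold z, fresh in *. lia. }
  specialize (he _ _ hm (upd (upd v z a) (S z) b)). simpl in he.
  rewrite eval_subst in he. simpl in he. rewrite upd_eq in he.
  rewrite (eval_ext op _ (upd v z a)) in he by (intros n hn; apply upd_neq; lia).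
  rewrite he. apply eval_ext. intros n hn. unfold upd.
  destruct (Nat.eqb_spec n z); [reflexivity|].
  destruct (Nat.eqb_spec n (S z)); [lia|reflexivity].
Qed.

Lemma Pset_root G t r : entails G (t, r) -> Pset G t r [].
Proof.
  intros he. split; [exists t; split; [apply subterm_nil | exact he]|].
  intros q _ hq. now apply prefix_nil.
Qed.

Lemma Pset_root_only G t r p : Pcand G t r [] -> Pset G t r p -> p = [].
Proof. intros hc [_ hmin]. symmetry. apply hmin; [exact hc | exists p; reflexivity]. Qed.

Lemma Pset_child G a c r (b : bool) : ~ Pcand G (App a c) r [] ->
  Pset G (App a c) r [b] <-> entails G (if b then c else a, r).
Proof.
  intros hroot. split.
  - intros [[w [hw he]] _]. simpl in hw. rewrite subterm_nil in hw.
    destruct b; inversion hw; subst; exact he.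
  - intros he. split.
    + exists (if b then c else a). split; [destruct b; apply subterm_nil | exact he].
    + intros q hq hpre. destruct (prefix_one _ _ hpre) as [->| ->]; [contradiction|reflexivity].
Qed.

Lemma EPset_root G t r : entails G (t, r) -> (forall q, in_Pos t q -> PEss G t q) ->
  EPset G t r [].
Proof. intros he hall. split; [now apply Pset_root | intros q hq _; now apply hall]. Qed.

Definition S1 : idset := fun e => e = (App (Var 0) (Var 1), Var 0).

Definition x01 : term := App (Var 0) (Var 1).

Definition all_identities : idset := fun _ => True.

Definition left_zero (a b : bool) : bool := a.

Fixpoint leftmost (t : term) : nat :=
  match t with Var i => i | App a _ => leftmost a end.

Lemma eval_left_zero v t : eval left_zero v t = v (leftmost t).
Proof. induction t; simpl; auto. Qed.

Lemma left_zero_models_S1 : models S1 left_zero.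
Proof. intros e ->. intros v. reflexivity. Qed.

Section LeftZeroConsequences.
Variable H : idset.
Hypothesis HB : basic_closed H.
Hypothesis HS : incl S1 H.

Lemma S1_instance a b : H (App a b, a).
Proof.
  assert (h : H (App (Var 0) (Var 1), Var 0)) by (apply HS; reflexivity).
  exact (bc_subst2 H HB 0 a 1 b _ _ ltac:(lia) h).
Qed.

Lemma S1_leftmost t : H (t, Var (leftmost t)).
Proof.
  induction t as [i|a IHa b _]; simpl; [apply bc_refl; exact HB|].
  eapply bc_trans; [exact HB | apply S1_instance | exact IHa].
Qed.

(* An identity failing in the left-zero groupoid equates two distinct
   leftmost variables, so H collapses. *)
Lemma full_of_non_left_zero : ~ models H left_zero -> forall e, H e.
Proof.
  intros hm. apply not_all_ex_not in hm. destruct hm as [[t s] hm].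
  apply imply_to_and in hm. destruct hm as [hts hns].
  assert (hne : leftmost t <> leftmost s).
  { intros E. apply hns. intros v. simpl. now rewrite !eval_left_zero, E. }
  apply (bc_collapse H HB _ _ hne).
  eapply bc_trans; [exact HB | apply bc_sym, S1_leftmost; exact HB |].
  eapply bc_trans; [exact HB | exact hts | apply S1_leftmost].
Qed.
End LeftZeroConsequences.

(* If the left-zero groupoid is a model of H, the root of every term is
   essential but position 2 of x₀x₁ is not; essential composition with
   r = x₀, u = x₁ then turns x₀ ≈ x₀x₁ into x₁ ≈ x₀x₁. *)
Lemma full_of_left_zero_model H : SR_closed H -> incl S1 H -> models H left_zero ->
  forall e, H e.
Proof.
  intros [HB HR] HS hm.
  assert (hs : H (x01, Var 0)) by (apply HS; reflexivity).
  assert (root_ess : forall t, PEss H t []).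
  { intros t. apply (PEss_root H t left_zero true false hm). discriminate. }
  assert (right_iness : ~ PEss H x01 [true]).
  { apply not_PEss. apply entails_of. cbn.
    eapply bc_trans; [exact HB | apply S1_instance; auto |].
    apply bc_sym, S1_instance; auto. }
  assert (comp_var : ess_comp H (Var 0) (Var 0) (Var 1) = Var 1).
  { apply rs_root, EPset_root; [apply entails_refl|].
    intros q hq. rewrite (in_Pos_var _ _ hq). apply root_ess. }
  assert (comp_app : ess_comp H x01 (Var 0) (Var 1) = x01).
  { apply rs_empty. intros p [hp hall].
    assert (hc : Pcand H x01 (Var 0) [])
      by (exists x01; split; [reflexivity | apply entails_of; exact hs]).
    rewrite (Pset_root_only _ _ _ _ hc hp) in hall.
    apply right_iness, hall; [unfold in_Pos; discriminate | exists [true]; reflexivity]. }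
  assert (h : H (Var 1, x01)).
  { rewrite <- comp_var, <- comp_app. apply HR.
    - apply bc_sym; assumption.
    - exists [], (Var 0). split; [apply root_ess | split; [reflexivity | apply entails_refl]].
    - exists [], x01. split; [apply root_ess | split; [reflexivity|]].
      apply entails_of, bc_sym; assumption. }
  apply (bc_collapse H HB 1 0); [lia|]. eapply bc_trans; eassumption.
Qed.

Lemma SR_S1 : least_closure SR_closed S1 all_identities.
Proof.
  split; [|split].
  - split; [repeat split; intros; exact I | intros; exact I].
  - intros e _; exact I.
  - intros H hH hS e _. destruct (classic (models H left_zero)) as [hm|hm].
    + now apply full_of_left_zero_model.
    + apply (full_of_non_left_zero H (proj1 hH) hS hm).
Qed.

Lemma D_S1_strict : strict_incl (D S1) all_identities.
Proof.
  split; [intros e _; exact I|].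
  exists (Var 0, Var 1). split; [exact I|]. intros hD.
  pose proof (D_sound S1 left_zero left_zero_models_S1 _ hD (fun n => Nat.eqb n 0)) as h.
  discriminate h.
Qed.

Definition isApp (t : term) : bool := match t with App _ _ => true | _ => false end.

Definition deep (t : term) : Prop :=
  match t with Var _ => False | App a b => isApp a = true \/ isApp b = true end.

Lemma term_shape t :
  (exists i, t = Var i) \/ (exists i j, t = App (Var i) (Var j)) \/ deep t.
Proof. destruct t as [i|[i|] [j|]]; simpl; eauto. Qed.

Lemma isApp_subst t x r : isApp t = true -> isApp (subst_var t x r) = true.
Proof. destruct t; simpl; [discriminate|reflexivity]. Qed.

Lemma deep_subst t x r : deep t -> deep (subst_var t x r).
Proof.
  destruct t as [n|a b]; simpl; [tauto|].
  intros [h|h]; [left|right]; apply isApp_subst; auto.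
Qed.

Lemma isApp_subst2 t i a j b : isApp t = true -> isApp (subst2 i a j b t) = true.
Proof. destruct t; simpl; [discriminate|reflexivity]. Qed.

Lemma deep_subst2 t i a j b : deep t -> deep (subst2 i a j b t).
Proof.
  destruct t as [n|c d]; simpl; [tauto|].
  intros [h|h]; [left|right]; apply isApp_subst2; auto.
Qed.

Lemma deep_subst_occ w i r : isApp w = true -> occ i w = true -> isApp r = true ->
  deep (subst_var w i r).
Proof.
  intros hw ho hr. destruct w as [|[y|a1 a2] [z|b1 b2]]; try discriminate; simpl in *;
    try (left; reflexivity); try (right; reflexivity).
  - apply Bool.orb_true_iff in ho.
    destruct ho as [ho|ho]; apply Nat.eqb_eq in ho; subst; rewrite Nat.eqb_refl; auto.
Qed.

Lemma deep_replace_depth2 t b b' q r : in_Pos t (b :: b' :: q) ->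
  deep (replace_at t (b :: b' :: q) r).
Proof.
  intros hp. destruct (in_Pos_cons _ _ _ hp) as (a & c & ->).
  unfold in_Pos in hp; simpl in hp.
  destruct b; [right; destruct (in_Pos_cons c b' q hp) as (c1 & c2 & ->)
              | left; destruct (in_Pos_cons a b' q hp) as (a1 & a2 & ->)];
    destruct b'; reflexivity.
Qed.

Lemma deep_below t p : deep t -> in_Pos t p ->
  exists q, in_Pos t q /\ prefix p q /\ forall r, deep (replace_at t q r).
Proof.
  intros hd hp. destruct t as [|a c]; [contradiction|].
  destruct p as [|b [|b' p']].
  - destruct hd as [ha|hc].
    + destruct a as [|a1 a2]; [discriminate|]. exists [false; false].
      split; [unfold in_Pos; simpl; rewrite subterm_nil; discriminate|].
      split; [exists [false; false]; reflexivity | left; reflexivity].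
    + destruct c as [|c1 c2]; [discriminate|]. exists [true; false].
      split; [unfold in_Pos; simpl; rewrite subterm_nil; discriminate|].
      split; [exists [true; false]; reflexivity | right; reflexivity].
  - destruct (isApp (if b then a else c)) eqn:hother.
    + exists [b]. split; [exact hp|]. split; [apply prefix_refl|].
      intros r. destruct b; simpl in *; [left | right]; exact hother.
    + assert (hchild : isApp (if b then c else a) = true)
        by (destruct b; simpl in *; destruct hd; congruence).
      destruct (if b then c else a) as [|d1 d2] eqn:hd'; [discriminate|].
      exists [b; false]. split.
      * unfold in_Pos; destruct b; simpl; rewrite hd'; simpl; rewrite subterm_nil; discriminate.
      * split; [exists [false]; reflexivity | intros r; apply deep_replace_depth2].
        unfold in_Pos; destruct b; simpl; rewrite hd'; simpl; rewrite subterm_nil; discriminate.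
  - exists (b :: b' :: p'). split; [exact hp|].
    split; [apply prefix_refl | intros r; now apply deep_replace_depth2].
Qed.

Inductive three := zero3 | one3 | two3.

Definition opA3 (x y : three) : three :=
  match x, y with two3, two3 => one3 | _, _ => zero3 end.

Definition S2 : idset := sat opA3.

Lemma opA3_not_two x y : opA3 x y <> two3.
Proof. destruct x, y; discriminate. Qed.

Lemma opA3_zero x y : x <> two3 \/ y <> two3 -> opA3 x y = zero3.
Proof. destruct x, y; simpl; tauto. Qed.

Lemma eval_A3_app t v : isApp t = true -> eval opA3 v t <> two3.
Proof. destruct t; simpl; [discriminate | intros _; apply opA3_not_two]. Qed.

Lemma eval_A3_deep t v : deep t -> eval opA3 v t = zero3.
Proof.
  destruct t as [|a b]; simpl; [tauto|].
  intros [h|h]; apply opA3_zero; [left|right]; now apply eval_A3_app.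
Qed.

Lemma S2_var i s : S2 (Var i, s) -> s = Var i.
Proof.
  intros h. destruct s as [j|a b].
  - destruct (Nat.eqb_spec i j) as [->|hne]; [reflexivity|]. exfalso.
    specialize (h (fun n => if Nat.eqb n i then two3 else zero3)). simpl in h.
    rewrite Nat.eqb_refl in h. destruct (Nat.eqb_spec j i); [congruence | discriminate].
  - exfalso. specialize (h (fun _ => two3)). symmetry in h. exact (opA3_not_two _ _ h).
Qed.

Lemma S2_not_shallow_deep i j d : deep d -> ~ S2 (App (Var i) (Var j), d).
Proof.
  intros hd h. specialize (h (fun _ => two3)). simpl in h.
  rewrite eval_A3_deep in h by exact hd. discriminate.
Qed.

Lemma S2_deep t s : deep t -> deep s -> S2 (t, s).
Proof. intros ht hs v. simpl. now rewrite !eval_A3_deep. Qed.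

Lemma S2_swap i j : S2 (App (Var i) (Var j), App (Var j) (Var i)).
Proof. intros v. simpl. destruct (v i), (v j); reflexivity. Qed.

Lemma S2_shape t s : S2 (t, s) ->
  t = s \/ (deep t /\ deep s) \/
  exists i j k l, t = App (Var i) (Var j) /\ s = App (Var k) (Var l).
Proof.
  intros h.
  destruct (term_shape t) as [(i & ->) | [(i & j & ->) | ht]];
    [left; symmetry; now apply S2_var|..];
  destruct (term_shape s) as [(k & ->) | [(k & l & ->) | hs]];
    try solve [left; now apply S2_var, sat_sym].
  - right; right; exists i, j, k, l; auto.
  - exfalso; now apply (S2_not_shallow_deep i j s).
  - exfalso; apply (S2_not_shallow_deep k l t); [exact ht | apply sat_sym, h].
  - right; left; auto.
Qed.

(* Deep terms are untouched by essential composition: below each of their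
   positions lies a position whose replacement keeps the term deep, hence
   constant in every model of Σ₂. *)
Lemma EPset_S2_deep t r p : deep t -> ~ EPset S2 t r p.
Proof.
  intros hd [[[w [hw _]] _] hall].
  assert (hp : in_Pos t p) by (unfold in_Pos; rewrite hw; discriminate).
  destruct (deep_below t p hd hp) as (q & hq & hpq & hdq).
  apply (not_PEss S2 t q); [|now apply hall].
  apply entails_sat, S2_deep; [apply hdq | apply deep_subst, hdq].
Qed.

Lemma PEss_S2_shallow i j q : in_Pos (App (Var i) (Var j)) q ->
  PEss S2 (App (Var i) (Var j)) q.
Proof.
  intros hq. destruct q as [|b [|b' q]].
  - apply (PEss_root S2 _ opA3 zero3 one3); [intros e h; exact h | discriminate].
  - split; [exact hq|]. exists three, opA3. split; [intros e h; exact h|].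
    exists (fun _ => two3), two3, zero3.
    change (fresh (App (Var i) (Var j))) with (S (Nat.max i j)).
    destruct b; simpl; rewrite !upd_eq, !upd_neq by lia; discriminate.
  - exfalso. unfold in_Pos in hq. destruct b; simpl in hq; apply hq; reflexivity.
Qed.

Definition subst_eq_r (r u : term) (n : nat) : term :=
  if excluded_middle_informative (S2 (Var n, r)) then u else Var n.

Lemma ess_comp_shallow i j r u :
  ess_comp S2 (App (Var i) (Var j)) r u =
  if excluded_middle_informative (S2 (App (Var i) (Var j), r)) then u
  else App (subst_eq_r r u i) (subst_eq_r r u j).
Proof.
  unfold ess_comp.
  assert (EP_P : forall p, EPset S2 (App (Var i) (Var j)) r p <->
                           Pset S2 (App (Var i) (Var j)) r p).
  { intros p; split; [intros h; apply h|]. intros h; split; auto.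
    intros q hq _; now apply PEss_S2_shallow. }
  destruct (excluded_middle_informative (S2 (App (Var i) (Var j), r))) as [h|h].
  - apply rs_root, EP_P, Pset_root, entails_sat, h.
  - assert (hroot : ~ Pcand S2 (App (Var i) (Var j)) r []).
    { intros [w [hw he]]. rewrite subterm_nil in hw. inversion hw; subst.
      now apply h, entails_sat. }
    rewrite rs_app, !rs_var by (rewrite EP_P; intros [hc _]; contradiction).
    unfold subst_eq_r. f_equal; apply if_em_iff;
      rewrite EP_P, (Pset_child _ _ _ _ _ hroot); apply entails_sat.
Qed.

Lemma S2_SR_closed : SR_closed S2.
Proof.
  split; [apply sat_basic_closed|]. intros t s r u hts _ _.
  destruct (S2_shape t s hts) as [<- | [[dt ds] | (i & j & k & l & -> & ->)]].
  - apply bc_refl, sat_basic_closed.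
  - unfold ess_comp. rewrite !rs_empty by (intros p; now apply EPset_S2_deep). exact hts.
  - rewrite !ess_comp_shallow.
    destruct (excluded_middle_informative (S2 (App (Var i) (Var j), r))) as [h1|h1];
    destruct (excluded_middle_informative (S2 (App (Var k) (Var l), r))) as [h2|h2].
    + apply bc_refl, sat_basic_closed.
    + exfalso. apply h2. intros v. unfold S2, sat in *; simpl in *. rewrite <- (hts v). apply h1.
    + exfalso. apply h1. intros v. unfold S2, sat in *; simpl in *. rewrite (hts v). apply h2.
    + intros v. exact (hts (fun n => eval opA3 v (subst_eq_r r u n))).
Qed.

Definition app_identities : idset :=
  fun e => fst e = snd e \/ (isApp (fst e) = true /\ isApp (snd e) = true).

Lemma app_identities_basic_closed : basic_closed app_identities.
Proof.
  unfold basic_closed, app_identities; simpl. split; [|split; [|split]].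
  - intros t; left; reflexivity.
  - intros t s [h|h]; [left; auto | right; tauto].
  - intros t s w [h1|h1] [h2|h2]; subst; auto; right; tauto.
  - intros t s x r [h|h]; [left; subst; auto | right; split; apply isApp_subst; tauto].
Qed.

(* The constant groupoid is a model of Z, so Z does not equate a compound
   term with a variable. *)
Definition const_false (a b : bool) : bool := false.

Lemma entails_app_identities_isApp t r : isApp t = true ->
  entails app_identities (t, r) -> isApp r = true.
Proof.
  intros ht he. destruct r as [i|]; [|reflexivity].
  assert (hm : models app_identities const_false).
  { intros [t' s'] [h|h] v; simpl in *; [now subst|].
    destruct t', s'; simpl in *; try reflexivity; destruct h; discriminate. }
  specialize (he bool const_false hm (fun _ => true)). destruct t; simpl in *; discriminate.
Qed.

Lemma sigma_comp_app_identities t r u : isApp t = true ->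
  (isApp r = true -> sigma_comp app_identities t r u = u) /\
  (isApp r = false -> isApp (sigma_comp app_identities t r u) = true).
Proof.
  intros ht. split; intros hr.
  - apply rs_root, Pset_root, entails_of. right; auto.
  - destruct t as [|a b]; [discriminate|]. unfold sigma_comp. rewrite rs_app; [reflexivity|].
    intros [[w [hw he]] _]. rewrite subterm_nil in hw. inversion hw; subst.
    apply entails_app_identities_isApp in he; [congruence | reflexivity].
Qed.

Lemma app_identities_SigmaR_closed : SigmaR_closed app_identities.
Proof.
  split; [exact app_identities_basic_closed|].
  intros t s r u [h|[h1 h2]] _ _; simpl in *; [subst; left; reflexivity|].
  destruct (isApp r) eqn:hr.
  - left. simpl. now rewrite (proj1 (sigma_comp_app_identities t r u h1) hr),
                             (proj1 (sigma_comp_app_identities s r u h2) hr).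
  - right. simpl. split; now apply sigma_comp_app_identities.
Qed.

Lemma S2_incl_app_identities : incl S2 app_identities.
Proof.
  intros [t s] h. unfold app_identities; simpl.
  destruct (S2_shape t s h) as [-> | [[ht hs] | (i & j & k & l & -> & ->)]].
  - left; reflexivity.
  - destruct t, s; simpl in *; tauto.
  - right; split; reflexivity.
Qed.

(* The deep term (x₀x₀)x₀; Z is generated over Σ₂ by the identities ab ≈ cZ. *)
Definition cZ : term := App (App (Var 0) (Var 0)) (Var 0).

Lemma cZ_deep : deep cZ.
Proof. simpl; auto. Qed.

Lemma app_identities_strict : exists e, app_identities e /\ ~ S2 e.
Proof.
  exists (App (Var 0) (Var 1), cZ). split; [right; split; reflexivity|].
  intros h. specialize (h (fun _ => two3)). discriminate h.
Qed.

Inductive four := zero4 | one4 | two4 | three4.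

Definition opA4 (x y : four) : four :=
  match x, y with two4, three4 | three4, two4 => one4 | _, _ => zero4 end.

Lemma opA4_comm x y : opA4 x y = opA4 y x.
Proof. destruct x, y; reflexivity. Qed.

Lemma eval_A4_app t v : isApp t = true -> eval opA4 v t = zero4 \/ eval opA4 v t = one4.
Proof.
  destruct t; simpl; [discriminate|]. intros _.
  destruct (eval opA4 v t1), (eval opA4 v t2); simpl; auto.
Qed.

Lemma A4_null_or_distinct t : isApp t = true ->
  (exists i j, i <> j /\ t = App (Var i) (Var j)) \/ (forall v, eval opA4 v t = zero4).
Proof.
  intros ht. destruct (term_shape t) as [(i & ->) | [(i & j & ->) | hd]]; [discriminate| |].
  - destruct (Nat.eq_dec i j) as [<-|hij]; [right | left; eauto].
    intros v. simpl. destruct (v i); reflexivity.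
  - right. intros v. destruct t as [|a b]; [contradiction|].
    destruct hd as [h|h]; destruct (eval_A4_app _ v h) as [e|e]; simpl; rewrite e;
      destruct (eval opA4 v a), (eval opA4 v b); reflexivity.
Qed.

Section CollapseOverS2.
Variable K : idset.
Hypothesis HB : basic_closed K.
Hypothesis HS : incl S2 K.

Definition collapsed : Prop := forall a b, K (App a b, cZ).

Lemma collapsed_incl : collapsed -> incl app_identities K.
Proof.
  intros hZ [t s] [h|[h1 h2]]; simpl in *; [subst; now apply bc_refl|].
  destruct t as [|a b]; [discriminate|]. destruct s as [|c d]; [discriminate|].
  eapply bc_trans; [exact HB | apply hZ | apply bc_sym, hZ; exact HB].
Qed.

Lemma K_deep t s : deep t -> deep s -> K (t, s).
Proof. intros; apply HS, S2_deep; auto. Qed.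

Lemma K_swap i j w : K (App (Var i) (Var j), w) -> K (App (Var j) (Var i), w).
Proof. apply bc_trans; [exact HB | apply HS, S2_swap]. Qed.

Lemma collapsed_of_shallow_deep i j d : i <> j -> deep d ->
  K (App (Var i) (Var j), d) -> collapsed.
Proof.
  intros hij hd h a b.
  pose proof (bc_subst2 K HB i a j b _ _ hij h) as h'.
  rewrite subst2_app, subst2_var_l, subst2_var_r in h' by exact hij.
  eapply bc_trans; [exact HB | exact h' | apply K_deep; [now apply deep_subst2 | exact cZ_deep]].
Qed.

(* xᵢxⱼ ≈ w with w compound and containing a third variable y: put y := cZ. *)
Lemma collapsed_of_new_var i j y w : i <> j -> y <> i -> y <> j ->
  isApp w = true -> occ y w = true -> K (App (Var i) (Var j), w) -> collapsed.
Proof.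
  intros hij hyi hyj hw hy h.
  pose proof (bc_subst K HB _ _ y cZ h) as h'. rewrite sv_app, !sv_neq in h' by auto.
  exact (collapsed_of_shallow_deep i j _ hij (deep_subst_occ w y cZ hw hy eq_refl) h').
Qed.

(* xᵢxⱼ ≈ xᵢxᵢ: with commutativity it yields xᵢxᵢ ≈ xⱼxⱼ, then put xⱼ := cZ. *)
Lemma collapsed_of_square i j : i <> j ->
  K (App (Var i) (Var j), App (Var i) (Var i)) -> collapsed.
Proof.
  intros hij h.
  pose proof (bc_subst2 K HB i (Var j) j (Var i) _ _ hij h) as hren.
  rewrite !subst2_app, !subst2_var_l, subst2_var_r in hren by exact hij.
  assert (hsq : K (App (Var i) (Var i), App (Var j) (Var j))).
  { eapply bc_trans; [exact HB | apply bc_sym; [exact HB | exact h] |].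
    apply K_swap, hren. }
  pose proof (bc_subst K HB _ _ j cZ hsq) as h'. rewrite !sv_app, sv_neq, sv_eq in h' by auto.
  apply (collapsed_of_shallow_deep i j (App cZ cZ) hij); [simpl; auto|].
  eapply bc_trans; [exact HB | exact h | exact h'].
Qed.

Lemma collapsed_of_shallow i j w : i <> j -> isApp w = true ->
  ~ sat opA4 (App (Var i) (Var j), w) -> K (App (Var i) (Var j), w) -> collapsed.
Proof.
  intros hij hw hn h.
  destruct (term_shape w) as [(k & ->) | [(k & l & ->) | hd]]; [discriminate| |].
  2: exact (collapsed_of_shallow_deep i j w hij hd h).
  destruct (classic (k = i \/ k = j)) as [hk|hk].
  2: { apply (collapsed_of_new_var i j k _ hij) in h; simpl; try tauto.
       now rewrite Nat.eqb_refl. }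
  destruct (classic (l = i \/ l = j)) as [hl|hl].
  2: { apply (collapsed_of_new_var i j l _ hij) in h; simpl; try tauto.
       now rewrite Nat.eqb_refl, Bool.orb_true_r. }
  destruct hk as [-> | ->], hl as [-> | ->].
  - now apply (collapsed_of_square i j).
  - exfalso. now apply hn.
  - exfalso. apply hn. intros v. simpl. apply opA4_comm.
  - apply (collapsed_of_square j i); [auto | now apply K_swap].
Qed.

Lemma collapsed_of_var i w : w <> Var i -> K (Var i, w) -> collapsed.
Proof.
  intros hne h. destruct (occ i w) eqn:ho.
  - assert (hw : isApp w = true).
    { destruct w as [y|]; [|reflexivity]. simpl in ho. apply Nat.eqb_eq in ho. congruence. }
    pose proof (bc_subst K HB _ _ i (App (Var i) (Var (S i))) h) as h'. rewrite sv_eq in h'.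
    exact (collapsed_of_shallow_deep i (S i) _ ltac:(lia) (deep_subst_occ w i (App (Var i) (Var (S i))) hw ho eq_refl) h').
  - pose proof (bc_subst K HB _ _ i (App (Var 0) (Var 1)) h) as h1.
    pose proof (bc_subst K HB _ _ i cZ h) as h2.
    rewrite sv_eq, subst_notocc in h1, h2 by exact ho.
    apply (collapsed_of_shallow_deep 0 1 cZ ltac:(lia) cZ_deep).
    eapply bc_trans; [exact HB | exact h1 | apply bc_sym; [exact HB | exact h2]].
Qed.

Lemma collapsed_of_non_A4 t s : K (t, s) -> ~ sat opA4 (t, s) -> collapsed.
Proof.
  intros h hn. destruct t as [i|t1 t2].
  { apply (collapsed_of_var i s); [intros ->; apply hn; intros v; reflexivity | exact h]. }
  destruct s as [k|s1 s2].
  { apply (collapsed_of_var k (App t1 t2)); [discriminate | apply bc_sym; auto]. }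
  destruct (A4_null_or_distinct (App t1 t2) eq_refl) as [(i & j & hij & ht) | ht].
  { rewrite ht in h, hn. exact (collapsed_of_shallow i j (App s1 s2) hij eq_refl hn h). }
  destruct (A4_null_or_distinct (App s1 s2) eq_refl) as [(k & l & hkl & hs) | hs].
  { rewrite hs in h, hn. apply (collapsed_of_shallow k l (App t1 t2) hkl eq_refl).
    - intros h'. apply hn, sat_sym, h'.
    - apply bc_sym; auto. }
  exfalso. apply hn. intros v. cbn [fst snd]. now rewrite ht, hs.
Qed.
End CollapseOverS2.

(* When A₄ is a model of K, in x_n(x₀x₁) (n ≥ 2) only the subterm x₀x₁ is
   K-equal to x₀x₁ (the valuation x₀ ↦ 2, x₁ ↦ 3, else 0 separates it from
   x_n(x₀x₁) and x_n), and it sits at an essential position. *)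
Section CompositionInA4Models.
Variable K : idset.
Hypothesis HA4 : models K opA4.

Definition val23 (n : nat) : four := match n with 0 => two4 | 1 => three4 | _ => zero4 end.

Lemma not_entails_x01 w : eval opA4 val23 w <> one4 -> ~ entails K (w, x01).
Proof. intros h he. apply h, (he _ _ HA4 val23). Qed.

Lemma sigma_comp_x01 n u : 2 <= n -> sigma_comp K (App (Var n) x01) x01 u = App (Var n) u.
Proof.
  intros hn.
  assert (hvn : val23 n = zero4) by (destruct n as [|[|n]]; [lia | lia | reflexivity]).
  assert (hroot : ~ Pcand K (App (Var n) x01) x01 []).
  { intros [w [hw he]]. rewrite subterm_nil in hw. inversion hw; subst.
    apply (not_entails_x01 (App (Var n) x01)); [simpl; rewrite hvn; discriminate | exact he]. }
  unfold sigma_comp. rewrite rs_app by (intros [hc _]; contradiction).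
  rewrite rs_var, rs_root by (apply (Pset_child _ _ _ _ true hroot), entails_refl).
  destruct (excluded_middle_informative _) as [hl|hl]; [|reflexivity].
  exfalso. apply (Pset_child _ _ _ _ false hroot) in hl.
  apply (not_entails_x01 (Var n)); [simpl; rewrite hvn; discriminate | exact hl].
Qed.

Lemma SEss_x01 n : 2 <= n -> SEss K (App (Var n) x01) x01.
Proof.
  intros hn. exists [true], x01. split; [|split; [reflexivity | apply entails_refl]].
  split; [unfold in_Pos; discriminate|]. exists four, opA4. split; [exact HA4|].
  exists (fun _ => two4), three4, zero4.
  change (fresh (App (Var n) x01)) with (S (Nat.max n 1)).
  rewrite Nat.max_l by lia. simpl. rewrite !upd_eq, !upd_neq by lia. discriminate.
Qed.
End CompositionInA4Models.

(* If A₄ is a model of K, Σ-composition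
   of x₂(x₀x₁) ≈ x₃(x₀x₁) (deep, so in Σ₂) with r = x₀x₁, u = x₀ gives
   x₂x₀ ≈ x₃x₀, and x₃ := cZ gives x₂x₀ ≈ cZ x₀; otherwise K contains an
   identity failing in A₄. *)
Lemma app_identities_least K : SigmaR_closed K -> incl S2 K -> incl app_identities K.
Proof.
  intros [HB HR] HS. apply (collapsed_incl K HB).
  destruct (classic (models K opA4)) as [hm|hm].
  - assert (hts : K (App (Var 2) x01, App (Var 3) x01)) by (apply HS, S2_deep; simpl; auto).
    pose proof (HR _ _ x01 (Var 0) hts (SEss_x01 K hm 2 ltac:(lia)) (SEss_x01 K hm 3 ltac:(lia)))
      as h.
    rewrite !(sigma_comp_x01 K hm) in h by lia.
    pose proof (bc_subst K HB _ _ 3 cZ h) as h'.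
    rewrite !sv_app, !sv_eq, !sv_neq in h' by lia.
    exact (collapsed_of_shallow_deep K HB HS 2 0 (App cZ (Var 0)) ltac:(lia) ltac:(simpl; auto) h').
  - apply not_all_ex_not in hm. destruct hm as [[t s] hm].
    apply imply_to_and in hm. destruct hm as [hts hn].
    exact (collapsed_of_non_A4 K HB HS t s hts hn).
Qed.

Theorem proposition6p2 :
  exists S1 S2 : idset,
    (exists G1, least_closure SR_closed S1 G1 /\ strict_incl (D S1) G1) /\
    (exists G2 H2, least_closure SR_closed S2 G2 /\
                   least_closure SigmaR_closed S2 H2 /\
                   strict_incl G2 H2).
Proof.
  exists S1, S2. split.
  -
    exists all_identities. split; [exact SR_S1 | exact D_S1_strict].
  -
    exists S2, app_identities. split; [|split].
    + split; [exact S2_SR_closed | split; [intros e h; exact h | intros H _ h; exact h]].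
    + split; [exact app_identities_SigmaR_closed|].
      split; [exact S2_incl_app_identities | exact app_identities_least].
    + split; [exact S2_incl_app_identities | exact app_identities_strict].
Qed.
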